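(* Let $R$ be an integral domain and $M$ an $R$-module. If $x\in M$ is not $R$-torsion and $y\in M$ is $R$-torsion, then $[x]=[x+y]$ in $\mathbb{P}(M)$.
   Context: For an $R$-module $M$ let $M^\circ=M\setminus\{0\}$; define $x\sim'y$ on $M^\circ$ if there exist $m\in M$ and $r,s\in R$ with $x=rm$, $y=sm$; let $\sim$ be the equivalence relation generated by $\sim'$; and let $\mathbb{P}(M)=M^\circ/\sim$, with $[x]$ the class of $x$. An element $y$ is $R$-torsion if $ry=0$ for some nonzero $r\in R$. *)

From HB Require Import structures.
From mathcomp Require Import all_boot all_order all_algebra.
From Stdlib Require Import Relations.
Set Implicit Arguments. Unset Strict Implicit. Unset Printing Implicit Defensive.
Import GRing.Theory.
Local Open Scope ring_scope.

Definition nonzero (R : idomainType) (M : lmodType R) := {x : M | x != 0}.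

Definition proj_rel0 (R : idomainType) (M : lmodType R) (x y : nonzero M) : Prop :=
  exists (m : M) (r s : R), sval x = r *: m /\ sval y = s *: m.

(* ~ : equivalence relation generated by ~' ; [x] = [y] in P(M) iff x ~ y *)
Definition proj_equiv (R : idomainType) (M : lmodType R) : relation (nonzero M) :=
  clos_refl_sym_trans (nonzero M) (@proj_rel0 R M).

Definition is_torsion (R : idomainType) (M : lmodType R) (y : M) : Prop :=
  exists r : R, r != 0 /\ r *: y = 0.

From HB Require Import structures.
From mathcomp Require Import all_boot all_order all_algebra.
From Stdlib Require Import Relations.
Set Implicit Arguments. Unset Strict Implicit. Unset Printing Implicit Defensive.
Local Open Scope ring_scope.
Import GRing.Theory.

(* If r kills the torsion element y but not x, then r x = r (x + y) is a
   common nonzero multiple of x and x + y, which links them in P(M). *)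

Section ProjectiveClasses.

Variables (R : idomainType) (M : lmodType R).

Lemma not_torsion_scale_neq0 (x : M) (r : R) :
  ~ is_torsion x -> r != 0 -> r *: x != 0.
Proof. by move=> ntx r0; apply/eqP => rx0; apply: ntx; exists r. Qed.

Lemma not_torsion_neq0 (x : M) : ~ is_torsion x -> x != 0.
Proof. by move=> /not_torsion_scale_neq0 /(_ (oner_neq0 R)); rewrite scale1r. Qed.

Lemma scale_add_torsion (x y : M) (r : R) :
  r *: y = 0 -> r *: (x + y) = r *: x.
Proof. by move=> ry; rewrite scalerDr ry addr0. Qed.

Lemma proj_equiv_scale (u v : nonzero M) (r : R) :
  sval v = r *: sval u -> proj_equiv u v.
Proof. by move=> ev; apply: rst_step; exists (sval u), 1, r; rewrite scale1r. Qed.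

End ProjectiveClasses.

Theorem theorem4p16 (R : idomainType) (M : lmodType R) (x y : M) :
  ~ is_torsion x -> is_torsion y ->
  exists (hx : x != 0) (hxy : x + y != 0),
    proj_equiv (exist (fun z : M => z != 0) x hx)
               (exist (fun z : M => z != 0) (x + y) hxy).
Proof.
move=> ntx [r [r0 ry]].
have hrx : r *: x != 0 := not_torsion_scale_neq0 ntx r0.
have erxy : r *: (x + y) = r *: x := scale_add_torsion x ry.
have hxy : x + y != 0.
  by apply: contra_neq hrx => xy0; rewrite -erxy xy0 scaler0.
exists (not_torsion_neq0 ntx), hxy.
apply: (rst_trans _ _ _ (exist _ (r *: x) hrx)).
- exact: proj_equiv_scale.
- by apply: rst_sym; apply: (proj_equiv_scale (r := r)); rewrite /= erxy.
Qed.
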